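(* If $\{x_k\}_{k\ge0}$ is log-convex, then the sequence $z_n=\sum_{k=0}^n\binom{n+k}{n-k}x_k$, $n\ge 0$, is log-convex.
   Context: A sequence $a_0,a_1,\ldots$ of nonnegative reals is log-convex if $a_{k-1}a_{k+1}\ge a_k^2$ for all $k\ge1$. *)

From mathcomp Require Import all_boot all_order all_algebra.
Set Implicit Arguments. Unset Strict Implicit. Unset Printing Implicit Defensive.
Import Order.TTheory GRing.Theory Num.Theory.
Local Open Scope ring_scope.

Definition log_convex (R : realFieldType) (a : nat -> R) : Prop :=
  (forall k, 0 <= a k) /\
  (forall k : nat, (1 <= k)%N -> a k ^+ 2 <= a k.-1 * a k.+1).

Definition zseq (R : realFieldType) (x : nat -> R) (n : nat) : R :=
  \sum_(0 <= k < n.+1) ('C(n + k, n - k))%:R * x k.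

From mathcomp Require Import all_boot all_order all_algebra.
From mathcomp Require Import zify ring lra.
Set Implicit Arguments. Unset Strict Implicit. Unset Printing Implicit Defensive.
Import Order.TTheory GRing.Theory Num.Theory.
Local Open Scope ring_scope.

(* The coefficient matrix ('C(n+k, n-k))_{n,k} and a log-convex sequence are
   both totally positive of order 2, so the sequence w of z-values of the shifted
   sequence (x_{k+1}) satisfies z_{n+1} w_n <= z_n w_{n+1}.  Together with the
   Pascal-type recurrence z_{n+2} = 2 z_{n+1} - z_n + w_{n+1} this gives
     z_{n+1} z_{n+3} - z_{n+2}^2 = (z_n z_{n+2} - z_{n+1}^2) + (z_{n+1} w_{n+2} - z_{n+2} w_{n+1}),
   and log-convexity of z follows by induction on n. *)

Lemma sum_TP2_le (R : realDomainType) (N : nat) (c d e f : nat -> R) :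
    (forall i j, (i <= j)%N -> d i * c j <= c i * d j) ->
    (forall i j, (i <= j)%N -> f i * e j <= e i * f j) ->
  (\sum_(0 <= k < N) d k * e k) * (\sum_(0 <= k < N) c k * f k) <=
  (\sum_(0 <= k < N) c k * e k) * (\sum_(0 <= k < N) d k * f k).
Proof.
move=> cd ef; rewrite -subr_ge0 !big_distrlr /= -sumrB.
pose T i j := (c i * d j - d i * c j) * (e i * f j).
have -> : \sum_(0 <= i < N) (\sum_(0 <= j < N) c i * e i * (d j * f j) -
                        \sum_(0 <= j < N) d i * e i * (c j * f j))
          = \sum_(0 <= i < N) \sum_(0 <= j < N) T i j.
  by apply: eq_bigr => i _; rewrite -sumrB; apply: eq_bigr => j _; rewrite /T; ring.
(* Symmetrised, each term is a product of two 2x2 minors of the same sign. *)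
rewrite -(pmulrn_lge0 _ (isT : (0 < 2)%N)) mulr2n.
rewrite [X in _ + X]exchange_big -big_split /=.
apply: sumr_ge0 => i _; rewrite -big_split /=; apply: sumr_ge0 => j _.
have -> : T i j + T j i = (c i * d j - d i * c j) * (e i * f j - e j * f i).
  by rewrite /T; ring.
have [ij | ji] := leqP i j.
  by apply: mulr_ge0; rewrite subr_ge0; [exact: cd | rewrite mulrC; exact: ef].
apply: mulr_le0; rewrite subr_le0.
  by rewrite mulrC [d i * _]mulrC; apply/cd/ltnW.
by rewrite [e i * _]mulrC; apply/ef/ltnW.
Qed.

(* [zcoef n k] equals 'C(n+k, n-k) for k <= n and vanishes for k > n (unlike
   'C(n+k, n-k), since truncated subtraction gives n - k = 0). *)
Definition zcoef (n k : nat) : nat := 'C(n + k, k + k).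

Lemma zcoef_small n k : (n < k)%N -> zcoef n k = 0%N.
Proof. by move=> ltnk; rewrite /zcoef bin_small //; lia. Qed.

Lemma zcoef0 n : zcoef n 0 = 1%N.
Proof. by rewrite /zcoef addn0 bin0. Qed.

Lemma mul_zcoefS n k : (zcoef n.+1 k * (n.+1 - k) = zcoef n k * (n + k).+1)%N.
Proof.
have := mul_bin_down (n + k).+1 (k + k); rewrite /zcoef.
have -> : ((n + k).+1 - (k + k) = n.+1 - k)%N by lia.
by rewrite addSn mulnC => ->; rewrite mulnC.
Qed.

(* The ratio zcoef n.+1 k / zcoef n k = (n+k+1) / (n+1-k) grows with k. *)
Lemma zcoef_TP2 n i j : (i <= j)%N ->
  (zcoef n.+1 i * zcoef n j <= zcoef n i * zcoef n.+1 j)%N.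
Proof.
move=> le_ij; have [le_jn | ltnj] := leqP j n; last by rewrite (zcoef_small ltnj) muln0.
have pos : (0 < (n.+1 - i) * (n.+1 - j))%N by rewrite muln_gt0; apply/andP; split; lia.
rewrite -(leq_pmul2r pos).
have -> : (zcoef n.+1 i * zcoef n j * ((n.+1 - i) * (n.+1 - j)) =
    (zcoef n.+1 i * (n.+1 - i)) * zcoef n j * (n.+1 - j))%N by ring.
have -> : (zcoef n i * zcoef n.+1 j * ((n.+1 - i) * (n.+1 - j)) =
    (zcoef n.+1 j * (n.+1 - j)) * zcoef n i * (n.+1 - i))%N by ring.
rewrite !mul_zcoefS.
have -> : (zcoef n i * (n + i).+1 * zcoef n j * (n.+1 - j) =
    (zcoef n i * zcoef n j) * ((n + i).+1 * (n.+1 - j)))%N by ring.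
have -> : (zcoef n j * (n + j).+1 * zcoef n i * (n.+1 - i) =
    (zcoef n i * zcoef n j) * ((n + j).+1 * (n.+1 - i)))%N by ring.
rewrite leq_mul2l; apply/orP; right; nia.
Qed.

Lemma zcoef_rec m k :
  (zcoef m.+2 k.+1 + zcoef m k.+1 = 2 * zcoef m.+1 k.+1 + zcoef m.+1 k)%N.
Proof.
rewrite /zcoef !addSn !addnS.
by rewrite (binS (m + k).+2 (k + k).+1) (binS (m + k).+1 (k + k))
           (binS (m + k).+1 (k + k).+1); lia.
Qed.

Lemma zseq_zcoef (R : realFieldType) (x : nat -> R) m N : (m < N)%N ->
  zseq x m = \sum_(0 <= k < N) (zcoef m k)%:R * x k.
Proof.
move=> ltmN; rewrite /zseq !big_mkord.
rewrite (big_ord_widen N (fun k => ('C(m + k, m - k))%:R * x k)) //.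
rewrite big_mkcond /=; apply: eq_bigr => k _.
rewrite ltnS; case: leqP => [le_km | lt_mk]; last by rewrite zcoef_small ?mul0r.
by rewrite /zcoef -bin_sub; [congr (_%:R * _); congr 'C(_, _) | ]; lia.
Qed.

Lemma zseq_zcoefS (R : realFieldType) (x : nat -> R) m N : (m <= N)%N ->
  zseq x m = x 0%N + \sum_(0 <= k < N) (zcoef m k.+1)%:R * x k.+1.
Proof.
by move=> le_mN; rewrite (zseq_zcoef x (le_mN : m < N.+1)%N) big_nat_recl // zcoef0 mul1r.
Qed.

Lemma zseq_recS (R : realFieldType) (x : nat -> R) m :
  zseq x m.+2 = 2 * zseq x m.+1 - zseq x m + zseq (fun k => x k.+1) m.+1.
Proof.
rewrite !(@zseq_zcoefS _ x _ m.+3) ?(@zseq_zcoef _ (fun k => x k.+1) _ m.+3); try lia.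
have coef_rec k : (zcoef m.+2 k.+1)%:R * x k.+1 + (zcoef m k.+1)%:R * x k.+1 =
    2 * ((zcoef m.+1 k.+1)%:R * x k.+1) + (zcoef m.+1 k)%:R * x k.+1 :> R.
  by rewrite -mulrDl -natrD zcoef_rec natrD natrM mulrDl mulrA.
have := @eq_bigr R 0 +%R nat (index_iota 0 m.+3) xpredT _ _ (fun k _ => coef_rec k).
rewrite !big_split /= -mulr_sumr; lra.
Qed.

Section Zseq.
Variables (R : realFieldType) (x : nat -> R).
Hypothesis lcx : log_convex x.

Lemma zseq_ge0 n : 0 <= zseq x n.
Proof. by apply: sumr_ge0 => k _; apply: mulr_ge0; [exact: ler0n | exact: lcx.1]. Qed.

Lemma log_convex_cross i j : (i <= j)%N -> x i.+1 * x j <= x i * x j.+1.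
Proof.
have [x_ge0 lc] := lcx; move=> /subnK <-; elim: (j - i)%N => [|d IH].
  by rewrite add0n mulrC.
rewrite addSn; set c := x (d + i).+1.
have [c0 | c_neq0] := eqVneq c 0.
  by rewrite c0 mulr0; apply: mulr_ge0.
have c_gt0 : 0 < c by rewrite lt_def c_neq0 x_ge0.
rewrite -(ler_pM2l c_gt0).
have lc_c : x i.+1 * c ^+ 2 <= x i.+1 * (x (d + i) * x (d + i).+2).
  by apply: ler_wpM2l; [exact: x_ge0 | exact: lc].
have IHc : x i.+1 * x (d + i) * x (d + i).+2 <= x i * c * x (d + i).+2.
  exact: ler_wpM2r.
nra.
Qed.

Lemma zseq_shift_cross m :
  zseq x m.+1 * zseq (fun k => x k.+1) m <= zseq x m * zseq (fun k => x k.+1) m.+1.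
Proof.
rewrite !(@zseq_zcoef _ _ _ m.+2) //.
apply: sum_TP2_le => i j le_ij; first by rewrite -!natrM ler_nat zcoef_TP2.
exact: log_convex_cross.
Qed.

Lemma zseq_log_convexS m : zseq x m.+1 ^+ 2 <= zseq x m * zseq x m.+2.
Proof.
elim: m => [|m IH].
  have [x_ge0 lc] := lcx; have := lc 1%N isT; have := x_ge0 0%N; have := x_ge0 1%N.
  rewrite /zseq !big_nat_recr //= !big_nil !add0r !addn0 !subn0 !subnn !bin0 !binn.
  rewrite (_ : 'C(2 + 1, 2 - 1) = 3%N) //; nra.
have := zseq_shift_cross m.+1; have := zseq_recS x m; move: IH.
rewrite [zseq x m.+3]zseq_recS.
set z0 := zseq x m; set z1 := zseq x m.+1; set z2 := zseq x m.+2.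
set w1 := zseq _ m.+1; set w2 := zseq _ m.+2 => IH rec cross.
rewrite -subr_ge0 expr2 {2}rec.
have -> : z1 * (2 * z2 - z1 + w2) - (2 * z1 - z0 + w1) * z2 =
    (z0 * z2 - z1 ^+ 2) + (z1 * w2 - z2 * w1) by ring.
by apply: addr_ge0; rewrite subr_ge0.
Qed.
End Zseq.

Theorem proposition4p9 (R : realFieldType) (x : nat -> R) :
  log_convex x -> log_convex (zseq x).
Proof.
move=> lcx; split=> [n | [//|m] _]; first exact: zseq_ge0.
exact: zseq_log_convexS.
Qed.
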